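(* Let $A$ and $B$ be irreducible $\{0,1\}$-matrices, neither of which is a permutation matrix. If the one-sided topological Markov shifts $(X_A,\sigma_A)$ and $(X_B,\sigma_B)$ are coded equivalent, then they are continuously orbit equivalent.
   Context: For an $N\times N$ matrix $A=[A(i,j)]_{i,j=1}^N$ with entries in $\{0,1\}$, put $\Sigma_A=\{1,\dots,N\}$ and let $X_A$ be the set of sequences $(x_n)_{n\in\mathbb{N}}$ in $\Sigma_A$ with $A(x_n,x_{n+1})=1$ for all $n$, with the product topology and the shift $\sigma_A((x_n)_n)=(x_{n+1})_n$; $(X_A,\sigma_A)$ is the one-sided topological Markov shift. $B_k(X_A)$ is the set of admissible words of length $k$ (words occurring in elements of $X_A$), $B_0(X_A)$ is the empty word, $B_*(X_A)=\bigcup_{k\ge0}B_k(X_A)$. For a word $w=w_1w_2\cdots w_\ell$ put $\sigma_A(w)=w_2\cdots w_\ell$. A code is a nonempty $\mathcal{C}\subset B_*(X_A)$ such that whenever $\omega(i_1)\cdots\omega(i_k)=\omega(j_1)\cdots\omega(j_n)$ with all $\omega(\cdot)\in\mathcal{C}$, then $n=k$ and $\omega(i_m)=\omega(j_m)$ for all $m$. A prefix code is a code in which no word is a beginning (prefix) of another. A finite prefix code $\mathcal{C}=\{\omega(1),\dots,\omega(M)\}\subset B_*(X_A)$, with $\Sigma_{A(\mathcal{C})}=\{1,\dots,M\}$, is a right Markov code for $(X_A,\sigma_A)$ if: (i) for every $\gamma\in B_*(X_A)$ there is $\eta\in B_*(X_A)$ with $\gamma\eta\in B_*(X_A)$ and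 a unique finite sequence $(i_1,\dots,i_k)$ in $\Sigma_{A(\mathcal{C})}$ with $\gamma\eta=\omega(i_1)\cdots\omega(i_k)$; (ii) there is $L\in\mathbb{N}$ such that for all $i_1,\dots,i_L\in\Sigma_{A(\mathcal{C})}$ with $\omega(i_1)\cdots\omega(i_L)\in B_*(X_A)$ there exist $j_1,\dots,j_k\in\Sigma_{A(\mathcal{C})}$ (with $k$ depending on $(i_1,\dots,i_L)$) such that $\sigma_A(\omega(i_1))\omega(i_2)\cdots\omega(i_L)=\omega(j_1)\cdots\omega(j_k)$; (iii) for every $i,j\in\Sigma_{A(\mathcal{C})}$ there are $n_1,\dots,n_l\in\Sigma_{A(\mathcal{C})}$ with $\omega(i)\omega(n_1)\cdots\omega(n_l)\omega(j)\in B_*(X_A)$. Given a right Markov code $\mathcal{C}$, define the $M\times M$ matrix $A(\mathcal{C})(i,j)=A(r(\omega(i)),s(\omega(j)))$ where $s(\omega(i))$ and $r(\omega(i))$ are the first and last symbols of $\omega(i)$. Two shifts $(X_A,\sigma_A),(X_B,\sigma_B)$ are topologically conjugate if there is a homeomorphism $h:X_A\to X_B$ with $h\circ\sigma_A=\sigma_B\circ h$. For irreducible non-permutation $A,B$, $(X_A,\sigma_A)$ and $(X_B,\sigma_B)$ are elementary coded equivalent if there exist a right Markov code $\mathcal{C}_1$ for $(X_A,\sigma_A)$ and a right Markov code $\mathcal{C}_2$ for $(X_B,\sigma_B)$ such that $(X_{A(\mathcal{C}_1)},\sigma_{A(\mathcal{C}_1)})$ and $(X_{B(\mathcal{C}_2)},\sigma_{B(\mathcal{C}_2)})$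 are topologically conjugate; they are coded equivalent if there is a finite chain $A=A_0,A_1,\dots,A_m=B$ of irreducible non-permutation $\{0,1\}$-matrices with consecutive shifts elementary coded equivalent. $(X_A,\sigma_A)$ and $(X_B,\sigma_B)$ are continuously orbit equivalent if there exist a homeomorphism $h:X_A\to X_B$ and continuous maps $k_1,l_1:X_A\to\mathbb{Z}_+$, $k_2,l_2:X_B\to\mathbb{Z}_+$ such that $\sigma_B^{k_1(x)}(h(\sigma_A(x)))=\sigma_B^{l_1(x)}(h(x))$ for $x\in X_A$ and $\sigma_A^{k_2(y)}(h^{-1}(\sigma_B(y)))=\sigma_A^{l_2(y)}(h^{-1}(y))$ for $y\in X_B$. *)

From mathcomp Require Import all_boot all_algebra.

Set Implicit Arguments.
Unset Strict Implicit.
Unset Printing Implicit Defensive.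

(* A {0,1}-matrix of size N is a boolean matrix ('M[bool]_N); the symbols
   {1,...,N} are represented by 'I_N. *)

Definition is_perm_matrix (N : nat) (A : 'M[bool]_N) : Prop :=
  (forall i : 'I_N, #|[set j | A i j]| = 1%N) /\
  (forall j : 'I_N, #|[set i | A i j]| = 1%N).

(* A is irreducible: for all i, j there is n >= 1 with A^n(i,j) > 0,
   i.e. a path of positive length from i to j in the graph of A. *)
Definition irreducible (N : nat) (A : 'M[bool]_N) : Prop :=
  forall i j : 'I_N, exists w : seq 'I_N,
    [/\ (0 < size w)%N, path (fun a b => A a b) i w & last i w = j].

Definition seqs (N : nat) := nat -> 'I_N.

Definition inX (N : nat) (A : 'M[bool]_N) (x : seqs N) : Prop :=
  forall n, A (x n) (x n.+1).

Definition shift (N : nat) (x : seqs N) : seqs N := fun n => x n.+1.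
Definition shiftn (N : nat) (k : nat) (x : seqs N) : seqs N := fun n => x (k + n)%N.

Definition agree (N : nat) (m : nat) (x y : seqs N) : Prop :=
  forall i, (i < m)%N -> x i = y i.

(* continuity, on the subspace P, for the product topology (discrete factors) *)
Definition cont_on (N N' : nat) (P : seqs N -> Prop) (f : seqs N -> seqs N') : Prop :=
  forall x, P x -> forall n, exists m, forall y, P y -> agree m y x -> agree n (f y) (f x).

(* continuity, on the subspace P, of a map into Z_+ (discrete) *)
Definition cont_nat_on (N : nat) (P : seqs N -> Prop) (k : seqs N -> nat) : Prop :=
  forall x, P x -> exists m, forall y, P y -> agree m y x -> k y = k x.

(* h : X_A -> X_B is a homeomorphism with inverse g : X_B -> X_A
   (maps on the ambient sequence spaces, restricted to X_A, X_B) *)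
Definition homeo_pair (N N' : nat) (A : 'M[bool]_N) (B : 'M[bool]_N')
    (h : seqs N -> seqs N') (g : seqs N' -> seqs N) : Prop :=
  [/\ (forall x, inX A x -> inX B (h x)),
      (forall y, inX B y -> inX A (g y)),
      (forall x, inX A x -> g (h x) =1 x),
      (forall y, inX B y -> h (g y) =1 y) &
      (cont_on (inX A) h /\ cont_on (inX B) g)].

Definition top_conj (N N' : nat) (A : 'M[bool]_N) (B : 'M[bool]_N') : Prop :=
  exists (h : seqs N -> seqs N') (g : seqs N' -> seqs N),
    homeo_pair A B h g /\ (forall x, inX A x -> h (shift x) =1 shift (h x)).

(* continuous orbit equivalence; g plays the role of h^{-1} *)
Definition cont_orbit_equiv (N N' : nat) (A : 'M[bool]_N) (B : 'M[bool]_N') : Prop :=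
  exists (h : seqs N -> seqs N') (g : seqs N' -> seqs N)
         (k1 l1 : seqs N -> nat) (k2 l2 : seqs N' -> nat),
    [/\ homeo_pair A B h g,
        (cont_nat_on (inX A) k1 /\ cont_nat_on (inX A) l1),
        (cont_nat_on (inX B) k2 /\ cont_nat_on (inX B) l2),
        (forall x, inX A x ->
           shiftn (k1 x) (h (shift x)) =1 shiftn (l1 x) (h x)) &
        (forall y, inX B y ->
           shiftn (k2 y) (g (shift y)) =1 shiftn (l2 y) (g y))].

Definition admissible (N : nat) (A : 'M[bool]_N) (w : seq 'I_N) : Prop :=
  w = [::] \/
  exists x k, inX A x /\ w = mkseq (fun i => x (k + i)%N) (size w).

(* a finite family of words omega : 'I_M -> seq 'I_N *)
Definition concat (N M : nat) (om : 'I_M -> seq 'I_N) (s : seq 'I_M) : seq 'I_N :=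
  flatten (map om s).

(* code: unique factorization (this forces om to be injective) *)
Definition is_code (N M : nat) (om : 'I_M -> seq 'I_N) : Prop :=
  forall s t : seq 'I_M, concat om s = concat om t -> s = t.

Definition is_prefix_code (N M : nat) (om : 'I_M -> seq 'I_N) : Prop :=
  is_code om /\ forall i j : 'I_M, i != j -> ~~ prefix (om i) (om j).

Definition right_markov_code (N : nat) (A : 'M[bool]_N) (M : nat)
    (om : 'I_M -> seq 'I_N) : Prop :=
  [/\ ((0 < M)%N /\ forall i, admissible A (om i)),
      is_prefix_code om,
      (forall gam, admissible A gam -> exists eta,
         admissible A (gam ++ eta) /\
         exists s, gam ++ eta = concat om s /\
                   forall t, gam ++ eta = concat om t -> t = s),
      (exists L, (0 < L)%N /\
         forall (i : 'I_M) (r : seq 'I_M), size r = L.-1 ->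
           admissible A (om i ++ concat om r) ->
           exists t, behead (om i) ++ concat om r = concat om t) &
      (forall i j : 'I_M, exists s, admissible A (om i ++ concat om s ++ om j))].

(* A(C)(i,j) = A(r(omega(i)), s(omega(j))) *)
Definition code_matrix (N : nat) (A : 'M[bool]_N) (M : nat)
    (om : 'I_M -> seq 'I_N) : 'M[bool]_M :=
  \matrix_(i, j) match om i, om j with
                 | a :: w, b :: _ => A (last a w) b
                 | _, _ => false
                 end.

Definition irr_nonperm (N : nat) (A : 'M[bool]_N) : Prop :=
  irreducible A /\ ~ is_perm_matrix A.

Definition elem_coded_equiv (N N' : nat) (A : 'M[bool]_N) (B : 'M[bool]_N') : Prop :=
  irr_nonperm A /\ irr_nonperm B /\
  exists (M1 : nat) (om1 : 'I_M1 -> seq 'I_N) (M2 : nat) (om2 : 'I_M2 -> seq 'I_N'),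
    [/\ right_markov_code A om1, right_markov_code B om2 &
        top_conj (code_matrix A om1) (code_matrix B om2)].

Definition bmat := {N : nat & 'M[bool]_N}.

Inductive coded_chain : bmat -> bmat -> Prop :=
  | chain_nil (X : bmat) : irr_nonperm (projT2 X) -> coded_chain X X
  | chain_cons (X Y Z : bmat) :
      elem_coded_equiv (projT2 X) (projT2 Y) -> coded_chain Y Z -> coded_chain X Z.

Definition coded_equiv (N N' : nat) (A : 'M[bool]_N) (B : 'M[bool]_N') : Prop :=
  coded_chain (existT _ N A) (existT _ N' B).

(* Continuous orbit equivalence is an equivalence relation (the cocycles of a
   composite are obtained by summing those of the second map along the orbit
   segments supplied by the first) and it is implied by topological conjugacy.
   It therefore suffices to show that X_A(C) and X_A are continuously orbit
   equivalent for a right Markov code C = {w_1, ..., w_M}.  The homeomorphism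
   sends x to the concatenation w_(x_0) w_(x_1) ..., and its inverse parses a
   point of X_A into codewords, which condition (i) and the prefix property make
   possible in exactly one way.  Concatenation turns the shift of x into the
   shift by |w_(x_0)| of the image.  For the parsing map, condition (ii) says
   that dropping the first letter of L consecutive codewords leaves again a
   concatenation of k codewords, so the parse of the shift of y shifted k times
   is the parse of y shifted L times. *)

From mathcomp Require Import all_boot all_algebra.
From mathcomp Require Import zify.
From Stdlib Require Import FunctionalExtensionality ClassicalEpsilon.

Set Implicit Arguments.
Unset Strict Implicit.
Unset Printing Implicit Defensive.

Section SequenceSpace.
Variable N : nat.
Implicit Types (A : 'M[bool]_N) (x y : seqs N).

Lemma shiftn0 x : shiftn 0 x = x.
Proof. by apply: functional_extensionality => n; rewrite /shiftn add0n. Qed.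

Lemma shiftn_shift k x : shiftn k (shift x) = shiftn k.+1 x.
Proof. by apply: functional_extensionality => n; rewrite /shiftn /shift addSn. Qed.

Lemma shift_shiftn k x : shift (shiftn k x) = shiftn k.+1 x.
Proof. by apply: functional_extensionality => n; rewrite /shiftn /shift addSnnS. Qed.

Lemma shiftnD k l x : shiftn k (shiftn l x) = shiftn (l + k) x.
Proof. by apply: functional_extensionality => n; rewrite /shiftn addnA. Qed.

Lemma inX_shiftn A k x : inX A x -> inX A (shiftn k x).
Proof. by move=> Ax n; rewrite /shiftn addnS. Qed.

Lemma inX_shift A x : inX A x -> inX A (shift x).
Proof. by move=> Ax n; apply: Ax. Qed.

Lemma agree_leq m m' x y : m' <= m -> agree m x y -> agree m' x y.
Proof. by move=> le_m'm xy i lt_im'; apply/xy/(leq_trans lt_im'). Qed.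

Lemma cont_on_shift A : cont_on (inX A) (@shift N).
Proof. by move=> x _ n; exists n.+1 => y _ yx i lt_in; apply: yx. Qed.

Lemma cont_nat_onD (P : seqs N -> Prop) (k l : seqs N -> nat) :
  cont_nat_on P k -> cont_nat_on P l -> cont_nat_on P (fun x => k x + l x).
Proof.
move=> ck cl x Px; have [m1 E1] := ck x Px; have [m2 E2] := cl x Px.
exists (maxn m1 m2) => y Py yx.
by rewrite E1 ?E2 //; apply: agree_leq yx; rewrite ?leq_maxl ?leq_maxr.
Qed.

End SequenceSpace.

Lemma cont_on_comp N1 N2 N3 (A1 : 'M[bool]_N1) (A2 : 'M[bool]_N2)
    (f : seqs N1 -> seqs N2) (g : seqs N2 -> seqs N3) :
  (forall x, inX A1 x -> inX A2 (f x)) ->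
  cont_on (inX A1) f -> cont_on (inX A2) g -> cont_on (inX A1) (fun x => g (f x)).
Proof.
move=> fA cf cg x Ax n.
have [m2 E2] := cg _ (fA _ Ax) n; have [m1 E1] := cf x Ax m2.
by exists m1 => y Ay yx; apply: E2; [apply: fA | apply: E1].
Qed.

Lemma cont_nat_on_comp N N' (A : 'M[bool]_N) (B : 'M[bool]_N')
    (c : nat -> seqs N' -> nat) (n : seqs N -> nat) (f : seqs N -> seqs N') :
  (forall x, inX A x -> inX B (f x)) ->
  (forall m, cont_nat_on (inX B) (c m)) -> cont_nat_on (inX A) n ->
  cont_on (inX A) f -> cont_nat_on (inX A) (fun x => c (n x) (f x)).
Proof.
move=> fA cc cn cf x Ax.
have [m0 E0] := cn x Ax; have [m1 E1] := cc (n x) (f x) (fA _ Ax).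
have [m2 E2] := cf x Ax m1.
exists (maxn m0 m2) => y Ay yx.
rewrite E0 //; last by apply: agree_leq yx; rewrite leq_maxl.
by apply: E1; [apply: fA | apply: E2 => //; apply: agree_leq yx; rewrite leq_maxr].
Qed.

Section Cocycle.
Variables (N N' : nat) (A : 'M[bool]_N).
Implicit Types (k l : seqs N -> nat) (h : seqs N -> seqs N').

Definition cocycle k n x : nat := \sum_(i < n) k (shiftn i x).

Lemma cocycleS k n x : cocycle k n.+1 x = cocycle k n x + k (shiftn n x).
Proof. by rewrite /cocycle big_ord_recr. Qed.

Lemma cont_nat_on_cocycle k n :
  cont_nat_on (inX A) k -> cont_nat_on (inX A) (cocycle k n).
Proof.
move=> ck; elim: n => [|n IHn] x Ax; first by exists 0 => y; rewrite /cocycle !big_ord0.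
have [m1 E1] := IHn x Ax; have [m2 E2] := ck _ (inX_shiftn n Ax).
exists (maxn m1 (n + m2)) => y Ay yx; rewrite !cocycleS.
rewrite E1 //; last by apply: agree_leq yx; rewrite leq_maxl.
rewrite E2 //; first exact: inX_shiftn.
by move=> i lt_im2; apply: yx; rewrite leq_max ltn_add2l lt_im2 orbT.
Qed.

Definition orbit_cocycle h k l : Prop :=
  forall x, inX A x -> shiftn (k x) (h (shift x)) =1 shiftn (l x) (h x).

Definition orbit_map h : Prop :=
  exists k l, [/\ cont_nat_on (inX A) k, cont_nat_on (inX A) l & orbit_cocycle h k l].

Lemma orbit_cocycle_iter h k l : orbit_cocycle h k l ->
  forall n x, inX A x ->
  shiftn (cocycle k n x) (h (shiftn n x)) = shiftn (cocycle l n x) (h x).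
Proof.
move=> hkl; elim=> [|n IHn] x Ax; first by rewrite /cocycle !big_ord0 !shiftn0.
have := functional_extensionality _ _ (hkl _ (inX_shiftn n Ax)).
rewrite shift_shiftn !cocycleS => En.
by rewrite addnC -shiftnD En shiftnD addnC -shiftnD IHn // shiftnD addnC.
Qed.

Lemma orbit_map_shift_commute h :
  (forall x, inX A x -> h (shift x) =1 shift (h x)) -> orbit_map h.
Proof.
move=> hs; exists (fun _ => 0), (fun _ => 1).
split; try by move=> x _; exists 0.
by move=> x Ax n; rewrite /shiftn add0n hs.
Qed.

End Cocycle.

Lemma cont_nat_on_cocycle_comp N N' (A : 'M[bool]_N) (B : 'M[bool]_N')
    (c : seqs N' -> nat) (n : seqs N -> nat) (f : seqs N -> seqs N') :
  (forall x, inX A x -> inX B (f x)) -> cont_on (inX A) f ->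
  cont_nat_on (inX B) c -> cont_nat_on (inX A) n ->
  cont_nat_on (inX A) (fun x => cocycle c (n x) (f x)).
Proof.
move=> fA cf cc cn; apply: (cont_nat_on_comp (B := B) (c := cocycle c)) => // m.
exact: cont_nat_on_cocycle.
Qed.

Lemma orbit_map_comp N1 N2 N3 (A1 : 'M[bool]_N1) (A2 : 'M[bool]_N2)
    (h1 : seqs N1 -> seqs N2) (h2 : seqs N2 -> seqs N3) :
  (forall x, inX A1 x -> inX A2 (h1 x)) -> cont_on (inX A1) h1 ->
  orbit_map A1 h1 -> orbit_map A2 h2 -> orbit_map A1 (fun x => h2 (h1 x)).
Proof.
move=> h1A ch1 [k1 [l1 [ck1 cl1 hkl1]]] [k2 [l2 [ck2 cl2 hkl2]]].
pose u x := h1 (shift x).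
have uA x : inX A1 x -> inX A2 (u x) by move=> Ax; apply/h1A/inX_shift.
have cu : cont_on (inX A1) u.
  by apply: (cont_on_comp (A2 := A1)) => //; [exact: inX_shift | exact: cont_on_shift].
exists (fun x => cocycle l2 (k1 x) (u x) + cocycle k2 (l1 x) (h1 x)).
exists (fun x => cocycle l2 (l1 x) (h1 x) + cocycle k2 (k1 x) (u x)).
split; [apply: cont_nat_onD | apply: cont_nat_onD | move=> x Ax];
  try by apply: (cont_nat_on_cocycle_comp (B := A2)).
have Eu := orbit_cocycle_iter hkl2 (k1 x) (uA _ Ax).
have Ex := orbit_cocycle_iter hkl2 (l1 x) (h1A _ Ax).
rewrite /u (functional_extensionality _ _ (hkl1 _ Ax)) in Eu.
by rewrite -shiftnD -Eu -shiftnD -Ex !shiftnD addnC.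
Qed.

Lemma cont_orbit_equivP N N' (A : 'M[bool]_N) (B : 'M[bool]_N') :
  cont_orbit_equiv A B <->
  exists h g, [/\ homeo_pair A B h g, orbit_map A h & orbit_map B g].
Proof.
split.
  move=> [h [g [k1 [l1 [k2 [l2 [hg [ck1 cl1] [ck2 cl2] hkl1 hkl2]]]]]]].
  by exists h, g; split => //; [exists k1, l1 | exists k2, l2].
move=> [h [g [hg [k1 [l1 [ck1 cl1 hkl1]]] [k2 [l2 [ck2 cl2 hkl2]]]]]].
by exists h, g, k1, l1, k2, l2.
Qed.

Lemma homeo_pair_id N (A : 'M[bool]_N) : homeo_pair A A id id.
Proof. by split=> //; split=> x _ n; exists n. Qed.

Lemma homeo_pair_sym N N' (A : 'M[bool]_N) (B : 'M[bool]_N') h g :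
  homeo_pair A B h g -> homeo_pair B A g h.
Proof. by move=> [hA gB gh hg [ch cg]]. Qed.

Lemma homeo_pair_comp N1 N2 N3 (A1 : 'M[bool]_N1) (A2 : 'M[bool]_N2)
    (A3 : 'M[bool]_N3) h1 g1 h2 g2 :
  homeo_pair A1 A2 h1 g1 -> homeo_pair A2 A3 h2 g2 ->
  homeo_pair A1 A3 (fun x => h2 (h1 x)) (fun z => g1 (g2 z)).
Proof.
move=> [h1A g1A g1h1 h1g1 [ch1 cg1]] [h2A g2A g2h2 h2g2 [ch2 cg2]].
split; try by [move=> x /h1A/h2A | move=> z /g2A/g1A].
- by move=> x Ax n; rewrite (functional_extensionality _ _ (g2h2 _ (h1A _ Ax))) g1h1.
- by move=> z Az n; rewrite (functional_extensionality _ _ (h1g1 _ (g2A _ Az))) h2g2.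
- by split; [exact: (cont_on_comp h1A) | exact: (cont_on_comp g2A)].
Qed.

Lemma cont_orbit_equiv_refl N (A : 'M[bool]_N) : cont_orbit_equiv A A.
Proof.
apply/cont_orbit_equivP; exists id, id.
by split; [exact: homeo_pair_id | |]; apply: orbit_map_shift_commute.
Qed.

Lemma cont_orbit_equiv_sym N N' (A : 'M[bool]_N) (B : 'M[bool]_N') :
  cont_orbit_equiv A B -> cont_orbit_equiv B A.
Proof.
move=> /cont_orbit_equivP [h [g [hg oh og]]].
by apply/cont_orbit_equivP; exists g, h; split => //; apply: homeo_pair_sym.
Qed.

Lemma cont_orbit_equiv_trans N1 N2 N3 (A1 : 'M[bool]_N1) (A2 : 'M[bool]_N2)
    (A3 : 'M[bool]_N3) :
  cont_orbit_equiv A1 A2 -> cont_orbit_equiv A2 A3 -> cont_orbit_equiv A1 A3.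
Proof.
move=> /cont_orbit_equivP [h1 [g1 [hg1 oh1 og1]]].
move=> /cont_orbit_equivP [h2 [g2 [hg2 oh2 og2]]].
apply/cont_orbit_equivP; exists (fun x => h2 (h1 x)), (fun z => g1 (g2 z)).
have [h1A _ _ _ [ch1 _]] := hg1; have [_ g2A _ _ [_ cg2]] := hg2.
split; [exact: (homeo_pair_comp hg1 hg2) | exact: (orbit_map_comp h1A ch1 oh1 oh2) |
        exact: (orbit_map_comp g2A cg2 og2 og1)].
Qed.

Lemma top_conj_cont_orbit_equiv N N' (A : 'M[bool]_N) (B : 'M[bool]_N') :
  top_conj A B -> cont_orbit_equiv A B.
Proof.
move=> [h [g [hg hs]]]; apply/cont_orbit_equivP; exists h, g.
split=> //; apply: orbit_map_shift_commute => // y By n.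
have [_ gB ghA hgB _] := hg.
have -> : shift y = h (shift (g y)).
  apply: functional_extensionality => i.
  by rewrite hs; [rewrite /shift hgB | apply: gB].
by apply: ghA; apply/inX_shift/gB.
Qed.

Section Words.
Variable T : Type.
Implicit Types f : nat -> T.

Lemma mkseqD f a b : mkseq f (a + b) = mkseq f a ++ mkseq (fun i => f (a + i)) b.
Proof.
rewrite /mkseq iotaD map_cat add0n; congr (_ ++ _).
by rewrite -[a in iota a]addn0 iotaDl -map_comp.
Qed.

Lemma mkseq_shift f n : mkseq f n.+1 = f 0 :: mkseq (fun i => f i.+1) n.
Proof. by rewrite -add1n mkseqD. Qed.

Lemma take_mkseq f a b : a <= b -> take a (mkseq f b) = mkseq f a.
Proof. by move=> le_ab; rewrite -(subnKC le_ab) mkseqD take_size_cat ?size_mkseq. Qed.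

Lemma mkseq_agree N m n (x y : seqs N) : agree m x y -> n <= m -> mkseq x n = mkseq y n.
Proof.
move=> xy le_nm; apply/eq_in_map => i; rewrite mem_iota add0n => /andP[_ lt_in].
exact/xy/(leq_trans lt_in).
Qed.

End Words.

Section Concatenation.
Variables (N M : nat) (om : 'I_M -> seq 'I_N).

Lemma concat_cat s t : concat om (s ++ t) = concat om s ++ concat om t.
Proof. by rewrite /concat map_cat flatten_cat. Qed.

Lemma concat_cons i s : concat om (i :: s) = om i ++ concat om s.
Proof. by []. Qed.

Lemma concat1 i : concat om [:: i] = om i.
Proof. exact: cats0. Qed.

Lemma code_word_neq0 : is_code om -> forall i, 0 < size (om i).
Proof.
move=> code_om i; rewrite lt0n size_eq0; apply/eqP => om_i.
by have := code_om [:: i] [::]; rewrite concat1 om_i => /(_ erefl).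
Qed.

Definition max_word_size : nat := \max_(i < M) size (om i).

Lemma leq_max_word_size i : size (om i) <= max_word_size.
Proof. exact: (leq_bigmax (F := fun i => size (om i))). Qed.

Lemma code_matrixE (A : 'M[bool]_N) (d : 'I_N) i j :
  0 < size (om i) -> 0 < size (om j) ->
  code_matrix A om i j = A (last d (om i)) (head d (om j)).
Proof. by rewrite mxE; case: (om i) => [|a w] //; case: (om j). Qed.

(* Arbitrary when no such factorization exists. *)
Definition refactor_behead (w : seq 'I_M) : seq 'I_M :=
  epsilon (inhabits [::]) (fun t => behead (concat om w) = concat om t).

Lemma refactor_beheadP w : (exists t, behead (concat om w) = concat om t) ->
  behead (concat om w) = concat om (refactor_behead w).
Proof. exact: epsilon_spec. Qed.

End Concatenation.

Lemma admissible_step N (A : 'M[bool]_N) (d : 'I_N) w i :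
  admissible A w -> i.+1 < size w -> A (nth d w i) (nth d w i.+1).
Proof.
case=> [-> // | [x [k [Ax Ew]]]] lt_iw.
by rewrite Ew !nth_mkseq ?addnS //; apply: ltnW.
Qed.

Section ConcatSeq.
Variables (N M : nat) (om : 'I_M -> seq 'I_N) (d : 'I_N).

(* [d] is only the default of [nth]; it is never read when no codeword is empty. *)
Definition concat_seq (x : seqs M) : seqs N :=
  fun n => nth d (concat om (mkseq x n.+1)) n.

Lemma cont_concat_seq (C : 'M[bool]_M) : cont_on (inX C) concat_seq.
Proof.
by move=> x _ n; exists n => y _ yx i lt_in; rewrite /concat_seq (mkseq_agree yx).
Qed.

Hypothesis om_neq0 : forall i, 0 < size (om i).

Lemma leq_size_concat s : size s <= size (concat om s).
Proof. by elim: s => [|i s IHs] //=; rewrite size_cat -add1n leq_add ?om_neq0. Qed.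

Lemma nth_concat_mkseq x m n :
  n < size (concat om (mkseq x m)) -> nth d (concat om (mkseq x m)) n = concat_seq x n.
Proof.
move=> lt_n; rewrite /concat_seq; case: (leqP m n.+1) => [le_m | lt_nm].
  by rewrite -(subnKC le_m) mkseqD concat_cat nth_cat lt_n.
rewrite -(subnKC (ltnW lt_nm)) mkseqD concat_cat nth_cat.
have -> // : n < size (concat om (mkseq x n.+1)).
by apply: leq_trans (leq_size_concat _); rewrite size_mkseq.
Qed.

Lemma concat_seq_prefix x m :
  mkseq (concat_seq x) (size (concat om (mkseq x m))) = concat om (mkseq x m).
Proof.
apply: (@eq_from_nth _ d); rewrite size_mkseq // => i lt_i.
by rewrite nth_mkseq // nth_concat_mkseq.
Qed.

Lemma concat_seq_head x i : i < size (om (x 0)) -> concat_seq x i = nth d (om (x 0)) i.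
Proof. by move=> lt_i; rewrite -(nth_concat_mkseq (m := 1)) concat1. Qed.

Lemma concat_seq_shift x n :
  concat_seq x (size (om (x 0)) + n) = concat_seq (shift x) n.
Proof.
have lt_n : n < size (concat om (mkseq (shift x) n.+1)).
  by apply: leq_trans (leq_size_concat _); rewrite size_mkseq.
rewrite -(nth_concat_mkseq (m := n.+2)); last first.
  by rewrite mkseq_shift concat_cons size_cat ltn_add2l.
rewrite mkseq_shift concat_cons nth_cat ltnNge leq_addr addKn.
exact: nth_concat_mkseq.
Qed.

Lemma concat_seq_inX (A : 'M[bool]_N) x :
  (forall i, admissible A (om i)) -> inX (code_matrix A om) x -> inX A (concat_seq x).
Proof.
move=> om_adm Cx n; elim/ltn_ind: n x Cx => n IHn x Cx.
case: (ltngtP n.+1 (size (om (x 0)))) => [lt_n | gt_n | eq_n].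
- by rewrite !concat_seq_head ?(ltnW lt_n) //; apply: admissible_step.
- have [k En] : exists k, n = size (om (x 0)) + k.
    by exists (n - size (om (x 0))); rewrite subnKC.
  rewrite En -addnS !concat_seq_shift; apply: IHn; last exact: inX_shift.
  by rewrite En -{1}[k]add0n ltn_add2r om_neq0.
- have -> : concat_seq x n = last d (om (x 0)).
    by rewrite concat_seq_head -?eq_n // -nth_last -eq_n.
  have -> : concat_seq x n.+1 = head d (om (x 1)).
    by rewrite eq_n -[size _]addn0 concat_seq_shift concat_seq_head // nth0.
  by have := Cx 0; rewrite (code_matrixE _ d).
Qed.

End ConcatSeq.

Section Parsing.
Variables (N M : nat) (om : 'I_M -> seq 'I_N) (d' : 'I_M).
Implicit Types (x : seqs M) (y : seqs N).

(* The default [d'] never occurs on X_A, see [first_word_prefix]. *)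
Definition first_word y : 'I_M := odflt d' [pick i | om i == mkseq y (size (om i))].

Definition drop_word y : seqs N := shiftn (size (om (first_word y))) y.

Definition parse_seq y : seqs M := fun n => first_word (iter n drop_word y).

Lemma parse_seqS y n : parse_seq y n.+1 = parse_seq (drop_word y) n.
Proof. by rewrite /parse_seq iterSr. Qed.

Lemma shift_parse_seq y : shift (parse_seq y) = parse_seq (drop_word y).
Proof. by apply: functional_extensionality => n; rewrite /shift parse_seqS. Qed.

Lemma first_word_agree y y' :
  agree (max_word_size om) y' y -> first_word y' = first_word y.
Proof.
move=> yy'; rewrite /first_word; congr odflt; apply: eq_pick => i /=.
by rewrite (mkseq_agree yy') // leq_max_word_size.
Qed.

Lemma parse_seq_agree n y y' :
  agree (n.+1 * max_word_size om) y' y -> parse_seq y' n = parse_seq y n.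
Proof.
elim: n y y' => [|n IHn] y y' yy'; first by apply: first_word_agree; rewrite mul1n in yy'.
have first_yy' : first_word y' = first_word y.
  by apply: first_word_agree; apply: agree_leq yy'; apply: leq_pmull.
rewrite !parse_seqS; apply: IHn => i lt_i; rewrite /drop_word first_yy' /shiftn.
apply: yy'; have := leq_max_word_size om (first_word y); rewrite mulSn; lia.
Qed.

Lemma cont_parse_seq (A : 'M[bool]_N) : cont_on (inX A) parse_seq.
Proof.
move=> y _ n; exists (n * max_word_size om) => y' _ yy' i lt_in.
by apply: parse_seq_agree; apply: agree_leq yy'; apply: leq_mul.
Qed.

Hypothesis prefix_om : is_prefix_code om.

Lemma prefix_code_uniq_prefix y i j :
  om i = mkseq y (size (om i)) -> om j = mkseq y (size (om j)) -> i = j.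
Proof.
have [_ not_prefix] := prefix_om.
wlog le_ij : i j / size (om i) <= size (om j).
  move=> wlog_ij Ei Ej; case: (leqP (size (om i)) (size (om j))) => [|/ltnW] le.
    exact: wlog_ij.
  by symmetry; apply: wlog_ij.
move=> Ei Ej; apply/eqP; apply: contraT => /not_prefix.
by rewrite prefixE Ej take_mkseq // -Ei eqxx.
Qed.

Lemma first_word_eq y i : om i = mkseq y (size (om i)) -> first_word y = i.
Proof.
move=> Ei; rewrite /first_word; case: pickP => [j /eqP Ej | /(_ i)] /=.
  exact: prefix_code_uniq_prefix Ej Ei.
by rewrite -Ei eqxx.
Qed.

Lemma parse_seq_shiftn y t : concat om t = mkseq y (size (concat om t)) ->
  shiftn (size t) (parse_seq y) = parse_seq (shiftn (size (concat om t)) y).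
Proof.
elim: t y => [|i t IHt] y Et; first by rewrite /= !shiftn0.
rewrite concat_cons size_cat in Et *.
have Ei : om i = mkseq y (size (om i)).
  by have := congr1 (take (size (om i))) Et; rewrite take_size_cat // take_mkseq ?leq_addr.
have first_y : first_word y = i by apply: first_word_eq.
have Et' : concat om t = mkseq (drop_word y) (size (concat om t)).
  have := congr1 (drop (size (om i))) Et.
  by rewrite drop_size_cat // mkseqD drop_size_cat ?size_mkseq // /drop_word first_y.
rewrite /= -shiftn_shift shift_parse_seq IHt //.
by rewrite /drop_word first_y shiftnD.
Qed.

Lemma parse_concat_seq (d : 'I_N) x : parse_seq (concat_seq om d x) =1 x.
Proof.
have om_neq0 := code_word_neq0 prefix_om.1.
have first_concat z : first_word (concat_seq om d z) = z 0.
  apply: first_word_eq; have := concat_seq_prefix d om_neq0 z 1.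
  by rewrite concat1 => ->.
have iter_drop n : iter n drop_word (concat_seq om d x) = concat_seq om d (shiftn n x).
  elim: n => [|n IHn]; first by rewrite shiftn0.
  rewrite iterS IHn /drop_word first_concat -shift_shiftn.
  by apply: functional_extensionality => i; rewrite [LHS]/shiftn concat_seq_shift.
by move=> n; rewrite /parse_seq iter_drop first_concat /shiftn addn0.
Qed.

End Parsing.

Section RightMarkovCode.
Variables (N M : nat) (A : 'M[bool]_N) (om : 'I_M -> seq 'I_N).
Variables (d : 'I_N) (d' : 'I_M).
Hypothesis rmc_om : right_markov_code A om.

Let prefix_om : is_prefix_code om. Proof. by case: rmc_om. Qed.
Let om_neq0 : forall i, 0 < size (om i). Proof. exact: code_word_neq0 prefix_om.1. Qed.

Let parse := parse_seq om d'.

Lemma first_word_prefix y :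
  inX A y -> om (first_word om d' y) = mkseq y (size (om (first_word om d' y))).
Proof.
move=> Ay; have [_ _ factor _ _] := rmc_om.
suff [i Ei] : exists i, om i = mkseq y (size (om i)).
  by rewrite (first_word_eq d' prefix_om Ei).
pose w := mkseq y (max_word_size om).+1.
have adm_w : admissible A w.
  by right; exists y, 0; split; rewrite // size_mkseq; apply: eq_mkseq.
have [eta [_ [[|i s] [Ew _]]]] := factor w adm_w.
  by have := congr1 size Ew; rewrite size_cat size_mkseq.
exists i; have le_i := leq_max_word_size om i.
have := congr1 (take (size (om i))) Ew.
rewrite concat_cons take_cat size_mkseq ltnS le_i take_mkseq ?(leqW le_i) //.
by rewrite take_size_cat.
Qed.

Lemma concat_parse_seq y m : inX A y ->
  concat om (mkseq (parse y) m) = mkseq y (size (concat om (mkseq (parse y) m))).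
Proof.
elim: m y => [|m IHm] y Ay //.
rewrite mkseq_shift concat_cons -/(shift (parse y)) shift_parse_seq IHm; last first.
  exact: inX_shiftn.
by rewrite size_cat size_mkseq mkseqD -first_word_prefix.
Qed.

Lemma concat_seq_parse_seq y : inX A y -> concat_seq om d (parse y) =1 y.
Proof.
move=> Ay n; rewrite /concat_seq concat_parse_seq // nth_mkseq //.
by apply: leq_trans (leq_size_concat om_neq0 _); rewrite size_mkseq.
Qed.

Lemma nth_first_word y i : inX A y -> i < size (om (first_word om d' y)) ->
  nth d (om (first_word om d' y)) i = y i.
Proof. by move=> Ay lt_i; rewrite first_word_prefix // nth_mkseq. Qed.

Lemma parse_seq_inX y : inX A y -> inX (code_matrix A om) (parse y).
Proof.
move=> Ay n; rewrite (code_matrixE _ d) // /parse /parse_seq iterS.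
set z := iter n _ y.
have Az : inX A z by elim: (n) @z => [|k IHk] //=; apply: inX_shiftn.
have lt0 := om_neq0 (first_word om d' _).
rewrite -nth0 nth_first_word ?lt0 //; last exact: inX_shiftn.
rewrite -nth_last nth_first_word ?prednK ?lt0 // /drop_word /shiftn addn0.
by rewrite -{2}(prednK (lt0 z)).
Qed.

Lemma homeo_pair_code : homeo_pair (code_matrix A om) A (concat_seq om d) parse.
Proof.
have [[_ om_adm] _ _ _ _] := rmc_om.
split=> [x Cx | y Ay | x _ | y Ay | ].
- exact: concat_seq_inX.
- exact: parse_seq_inX.
- exact: parse_concat_seq.
- exact: concat_seq_parse_seq.
- by split; [apply: cont_concat_seq | apply: cont_parse_seq].
Qed.

Lemma orbit_map_concat_seq : orbit_map (code_matrix A om) (concat_seq om d).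
Proof.
exists (fun _ => 0), (fun x => size (om (x 0))); split.
- by move=> x _; exists 0.
- by move=> x _; exists 1 => y _ yx; rewrite (yx 0).
- by move=> x _ n; rewrite /shiftn add0n concat_seq_shift.
Qed.

Lemma behead_parse_block :
  exists2 L, 0 < L & forall y, inX A y ->
    exists t, behead (concat om (mkseq (parse y) L)) = concat om t.
Proof.
have [_ _ _ [L [L_gt0 behead_factor]] _] := rmc_om.
exists L => // y Ay.
have Ew : mkseq (parse y) L = parse y 0 :: mkseq (fun n => parse y n.+1) L.-1.
  by rewrite -{1}(prednK L_gt0) mkseq_shift.
have adm : admissible A (om (parse y 0) ++ concat om (mkseq (fun n => parse y n.+1) L.-1)).
  rewrite -concat_cons -Ew concat_parse_seq //.
  by right; exists y, 0; split; rewrite // size_mkseq; apply: eq_mkseq.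
have [t Et] := behead_factor _ _ (size_mkseq _ _) adm.
by exists t; rewrite Ew concat_cons -Et; case: (om _) (om_neq0 (parse y 0)).
Qed.

Lemma parse_shift_block y L t : inX A y -> 0 < L ->
  behead (concat om (mkseq (parse y) L)) = concat om t ->
  shiftn (size t) (parse (shift y)) = shiftn L (parse y).
Proof.
move=> Ay L_gt0 Et; have Ew := concat_parse_seq L Ay.
set P := size (concat om _) in Ew.
have P_gt0 : 0 < P by apply: leq_trans (leq_size_concat om_neq0 _); rewrite size_mkseq.
have size_t : size (concat om t) = P.-1 by rewrite -Et Ew size_behead size_mkseq.
have Et' : concat om t = mkseq (shift y) (size (concat om t)).
  by rewrite size_t -Et Ew -{1}(prednK P_gt0) mkseq_shift.
have := parse_seq_shiftn d' prefix_om Ew; rewrite size_mkseq => ->.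
by rewrite /parse (parse_seq_shiftn d' prefix_om Et') size_t shiftn_shift prednK.
Qed.

Lemma orbit_map_parse_seq : orbit_map A parse.
Proof.
have [L L_gt0 behead_block] := behead_parse_block.
pose block y := mkseq (parse y) L.
exists (fun y => size (refactor_behead om (block y))), (fun _ => L); split.
- move=> y Ay; have [m Em] := cont_parse_seq om d' Ay L.
  exists m => y' Ay' yy'; congr (size (refactor_behead om _)).
  exact: (mkseq_agree (Em _ Ay' yy')).
- by move=> y _; exists 0.
- move=> y Ay n.
  by rewrite (parse_shift_block Ay L_gt0 (refactor_beheadP (behead_block y Ay))).
Qed.

End RightMarkovCode.

Lemma right_markov_code_cont_orbit_equiv N M (A : 'M[bool]_N) (om : 'I_M -> seq 'I_N) :
  right_markov_code A om -> cont_orbit_equiv (code_matrix A om) A.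
Proof.
move=> rmc_om; have [[M_gt0 _] [code_om _] _ _ _] := rmc_om.
pose d' := Ordinal M_gt0.
have [d _] : exists d : 'I_N, true by case: (om d') (code_word_neq0 code_om d') => [|a].
apply/cont_orbit_equivP; exists (concat_seq om d), (parse_seq om d').
split; [exact: homeo_pair_code | exact: orbit_map_concat_seq | exact: orbit_map_parse_seq].
Qed.

Lemma elem_coded_equiv_cont_orbit_equiv N N' (A : 'M[bool]_N) (B : 'M[bool]_N') :
  elem_coded_equiv A B -> cont_orbit_equiv A B.
Proof.
move=> [_ [_ [M1 [om1 [M2 [om2 [rmc1 rmc2 conj12]]]]]]].
apply: cont_orbit_equiv_trans (right_markov_code_cont_orbit_equiv rmc2).
apply: cont_orbit_equiv_trans (top_conj_cont_orbit_equiv conj12).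
exact/cont_orbit_equiv_sym/right_markov_code_cont_orbit_equiv.
Qed.

Lemma coded_chain_cont_orbit_equiv X Y :
  coded_chain X Y -> cont_orbit_equiv (projT2 X) (projT2 Y).
Proof.
elim=> [Z _ | X' Y' Z XY _ IH]; first exact: cont_orbit_equiv_refl.
exact: cont_orbit_equiv_trans (elem_coded_equiv_cont_orbit_equiv XY) IH.
Qed.

Theorem mainTheorem1 (N N' : nat) (A : 'M[bool]_N) (B : 'M[bool]_N') :
  irreducible A -> ~ is_perm_matrix A ->
  irreducible B -> ~ is_perm_matrix B ->
  coded_equiv A B -> cont_orbit_equiv A B.
Proof. by move=> _ _ _ _; apply: coded_chain_cont_orbit_equiv. Qed.
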